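(* Let $\mathcal P^*$ be any partition of $\mathcal M$ minimizing $\Delta$, and let $\lambda^*=\lambda^{(\mathcal P^* )}$. Then for any CR $\mathbf J$ obtained from an interactive communication $\mathbf F$, $$\lim_{n\to\infty}\frac1n\sum_{B\in\mathcal B}\lambda^*_B\,H(\mathbf J|X^n_{B^c},\mathbf F)=0.$$
   Context: Let $\mathcal M=\{1,\dots,m\}$, $m\ge2$, and let $X_{\mathcal M}=(X_1,\dots,X_m)$ be jointly distributed random variables on finite alphabets. $X^n_{\mathcal M}$ consists of $n$ i.i.d. copies of $X_{\mathcal M}$, and $X^n_A=(X^n_i:i\in A)$. An interactive communication $\mathbf F$ (depending on $n$) is a finite sequence of transmissions; each is sent by some terminal $i$ and is a deterministic function of $X^n_i$ and the previous transmissions. A common randomness (CR) obtained from $\mathbf F$ is a sequence $\mathbf J=\mathbf J^{(n)}$ of functions of $X^n_{\mathcal M}$ such that for every $0<\epsilon<1$ and all large $n$ there exist $J_i=J_i(X^n_i,\mathbf F)$, $i\in\mathcal M$, with $\Pr[J_1=\cdots=J_m=\mathbf J]\ge1-\epsilon$. For a partition $\mathcal P$ with $|\mathcal P|\ge2$, $\Delta(\mathcal P)=\frac{1}{|\mathcal P|-1}[\sum_{A\in\mathcal P}H(X_A)-H(X_{\mathcal M})]$. $\mathcal B$ is the set of nonempty proper subsets of $\mathcal M$, and $\lambda^{(\mathcal P)}_B=\mathbf 1\{B^c\in\mathcal P\}/(|\mathcal P|-1)$. *)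

From Stdlib Require Import Reals.
From mathcomp Require Import all_boot.
Set Implicit Arguments.
Unset Strict Implicit.
Unset Printing Implicit Defensive.

Local Open Scope R_scope.

Definition prob (W : finType) (p : W -> R) (E : pred W) : R :=
  \big[Rplus/0]_(w | E w) p w.

(* Shannon entropy (natural log) of a random variable Z : W -> T, i.e.
   H(Z) = - sum_w p(w) ln P[Z = Z(w)] = - sum_z P[Z=z] ln P[Z=z]. *)
Definition entropy (W : finType) (p : W -> R) (T : eqType) (Z : W -> T) : R :=
  - \big[Rplus/0]_(w : W) (p w * ln (prob p (fun w' => Z w' == Z w))).

Definition cond_entropy (W : finType) (p : W -> R) (T U : eqType)
  (Z : W -> T) (Y : W -> U) : R :=
  entropy p (fun w => (Z w, Y w)) - entropy p Y.

Definition iid_pmf (W : finType) (p : W -> R) (n : nat) (w : {ffun 'I_n -> W}) : R :=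
  \big[Rmult/1]_(t < n) p (w t).

Section Source.
Variables (m : nat) (Al : 'I_m -> finType) (W : finType)
          (X : forall i : 'I_m, W -> Al i).

Definition XA (A : {set 'I_m}) (w : W) : seq {i : 'I_m & Al i} :=
  [seq existT (fun i => Al i) i (X i w) | i <- enum A].

Definition Xn (n : nat) (i : 'I_m) (w : {ffun 'I_n -> W}) : {ffun 'I_n -> Al i} :=
  [ffun t => X i (w t)].

Definition XnA (n : nat) (A : {set 'I_m}) (w : {ffun 'I_n -> W})
  : seq {i : 'I_m & {ffun 'I_n -> Al i}} :=
  [seq existT (fun i => {ffun 'I_n -> Al i}) i (Xn i w) | i <- enum A].

(* A single transmission: a sender and a deterministic function of the
   sender's observation X_i^n and the previous transmissions.  Messages
   are encoded in nat (any finite alphabet injects into nat). *)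
Record transmission (n : nat) := Transmission {
  sender : 'I_m;
  message : {ffun 'I_n -> Al sender} -> seq nat -> nat }.

Definition communication (n : nat) := seq (transmission n).

Fixpoint run_aux (n : nat) (hist : seq nat) (F : communication n)
  (w : {ffun 'I_n -> W}) : seq nat :=
  match F with
  | [::] => hist
  | tr :: F' => run_aux (rcons hist (@message n tr (Xn (@sender n tr) w) hist)) F' w
  end.

Definition run (n : nat) (F : communication n) (w : {ffun 'I_n -> W}) : seq nat :=
  run_aux [::] F w.

Definition J_val (J : forall n, (forall i : 'I_m, {ffun 'I_n -> Al i}) -> nat)
  (n : nat) (w : {ffun 'I_n -> W}) : nat := J n (fun i => Xn i w).

Definition is_CR (p : W -> R) (F : forall n, communication n)
  (J : forall n, (forall i : 'I_m, {ffun 'I_n -> Al i}) -> nat) : Prop :=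
  forall eps : R, 0 < eps < 1 ->
  exists N : nat, forall n : nat, (N <= n)%N ->
    exists Ji : forall i : 'I_m, {ffun 'I_n -> Al i} -> seq nat -> nat,
      prob (@iid_pmf W p n)
        (fun w => [forall i, Ji i (Xn i w) (run (F n) w) == J_val J w])
      >= 1 - eps.

Definition Delta_part (p : W -> R) (P : {set {set 'I_m}}) : R :=
  (\big[Rplus/0]_(A in P) entropy p (XA A) - entropy p (XA setT))
  / INR (#|P| - 1).

Definition is_partition_M (P : {set {set 'I_m}}) : Prop :=
  partition P [set: 'I_m] /\ (2 <= #|P|)%N.

Definition lam (P : {set {set 'I_m}}) (B : {set 'I_m}) : R :=
  if ~: B \in P then / INR (#|P| - 1) else 0.

End Source.

(* Fano's inequality: if the event G, on which Z is a function of Y, has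
   probability at least 1 - d, then H(Z | Y) <= 2 + d ln |Omega|.  For a
   common randomness J and B <> M pick i in B^c: on the event where terminal i
   recovers J, J is a function of (X^n_{B^c}, F), so with Omega the n-fold
   sample space H(J | X^n_{B^c}, F) <= 2 + d n ln |W| eventually, for every
   d > 0.  Hence the weighted sum is o(n). *)

From HB Require Import structures.
From Stdlib Require Import Reals Lra.
From mathcomp Require Import all_boot.

Set Implicit Arguments.
Unset Strict Implicit.

Local Open Scope R_scope.

HB.instance Definition _ := Monoid.isComLaw.Build R 0 Rplus
  (fun x y z => esym (Rplus_assoc x y z)) Rplus_comm Rplus_0_l.
HB.instance Definition _ := Monoid.isComLaw.Build R 1 Rmult
  (fun x y z => esym (Rmult_assoc x y z)) Rmult_comm Rmult_1_l.
HB.instance Definition _ := Monoid.isMulLaw.Build R 0 Rmult Rmult_0_l Rmult_0_r.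
HB.instance Definition _ := Monoid.isAddLaw.Build R Rmult Rplus
  Rmult_plus_distr_r Rmult_plus_distr_l.

Section RealSums.
Variable I : finType.
Implicit Types (P Q : pred I) (f g : I -> R).

Lemma ler_sumR P f g : (forall i, P i -> f i <= g i) ->
  \big[Rplus/0]_(i | P i) f i <= \big[Rplus/0]_(i | P i) g i.
Proof.
move=> fg; apply: (big_ind2 (fun x y => x <= y)) => //; first lra.
by move=> *; apply: Rplus_le_compat.
Qed.

Lemma sumR_ge0 P f : (forall i, P i -> 0 <= f i) ->
  0 <= \big[Rplus/0]_(i | P i) f i.
Proof. by move=> f0; apply: (big_ind (fun x => 0 <= x)) => // *; lra. Qed.

Lemma ler_sumR_subpred P Q f : (forall i, 0 <= f i) -> (forall i, P i -> Q i) ->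
  \big[Rplus/0]_(i | P i) f i <= \big[Rplus/0]_(i | Q i) f i.
Proof.
move=> f0 PQ; rewrite (big_mkcond P) (big_mkcond Q); apply: ler_sumR => i _.
have := f0 i; case: (boolP (P i)) => [/PQ -> | _]; first lra.
by case: (Q i); lra.
Qed.

Lemma ler_sumR_term P f j : (forall i, 0 <= f i) -> P j ->
  f j <= \big[Rplus/0]_(i | P i) f i.
Proof.
move=> f0 Pj; rewrite (bigD1 j) //=.
have := @sumR_ge0 (fun i => P i && (i != j)) f (fun i _ => f0 i); lra.
Qed.

Lemma sumR_mulr P f c :
  \big[Rplus/0]_(i | P i) (f i * c) = (\big[Rplus/0]_(i | P i) f i) * c.
Proof. by symmetry; apply: (big_morph (fun x => x * c)) => [x y|]; lra. Qed.

Lemma sumR_mull P f c :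
  \big[Rplus/0]_(i | P i) (c * f i) = c * (\big[Rplus/0]_(i | P i) f i).
Proof. by rewrite Rmult_comm -sumR_mulr; apply: eq_bigr => i _; lra. Qed.

Lemma sumR_opp P f :
  \big[Rplus/0]_(i | P i) (- f i) = - (\big[Rplus/0]_(i | P i) f i).
Proof. by symmetry; apply: (big_morph Ropp) => [x y|]; lra. Qed.

Lemma sumR_const c : \big[Rplus/0]_(i : I) c = INR #|I| * c.
Proof.
rewrite big_const; elim: #|I| => [|k IH]; first by rewrite /=; lra.
by rewrite S_INR /= IH; lra.
Qed.

End RealSums.

Lemma ln_le_ln x y : 0 < x -> x <= y -> ln x <= ln y.
Proof. by move=> x0 [/(ln_increasing _ _ x0)|->]; lra. Qed.

Lemma ln_ratio_le a b c : 0 < a -> 0 < b -> 0 < c ->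
  ln a - ln b <= ln c + a / b / c.
Proof.
move=> a0 b0 c0; set r := a / b / c.
have r0 : 0 < r by apply: Rdiv_lt_0_compat => //; apply: Rdiv_lt_0_compat.
have -> : a = r * b * c by rewrite /r; field; lra.
clearbody r; rewrite !ln_mult //; last exact: Rmult_lt_0_compat.
have := exp_ineq1_le (ln r); rewrite exp_ln //; lra.
Qed.

Lemma Rdiv_le1 s b : 0 <= s -> s <= b -> s / b <= 1.
Proof.
move=> s0 [sb|<-]; last first.
  by have [->|s_neq0] := Req_dec s 0; [rewrite /Rdiv Rinv_0|rewrite /Rdiv Rinv_r]; lra.
have b0 : 0 < b by lra.
by apply: (Rmult_le_reg_r b) => //; rewrite /Rdiv Rmult_assoc Rinv_l; lra.
Qed.

Lemma pmf_card_gt0 (O : finType) (q : O -> R) :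
  \big[Rplus/0]_(w : O) q w = 1 -> 0 < INR #|O|.
Proof.
move=> q_sum1; apply: lt_0_INR; apply/ltP; rewrite lt0n.
by apply/negP => /eqP/card0_eq O0; move: q_sum1; rewrite big_pred0 //; lra.
Qed.

Section Fano.
Variables (O : finType) (q : O -> R).
Hypothesis q_ge0 : forall w, 0 <= q w.
Hypothesis q_sum1 : \big[Rplus/0]_(w : O) q w = 1.
Variables (T U : eqType) (Z : O -> T) (Y : O -> U).

Let PY w := prob q (fun w' => Y w' == Y w).
Let PZY w := prob q (fun w' => (Z w', Y w') == (Z w, Y w)).

Lemma prob_le1 (E : pred O) : prob q E <= 1.
Proof. by rewrite -q_sum1; apply: ler_sumR_subpred. Qed.

Lemma prob_predC (E : pred O) : prob q (predC E) = 1 - prob q E.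
Proof. by rewrite -q_sum1 (bigID E) /prob /=; lra. Qed.

Lemma cond_entropyE : cond_entropy q Z Y =
  \big[Rplus/0]_(w : O) (q w * (ln (PY w) - ln (PZY w))).
Proof.
rewrite [RHS](eq_bigr (fun w => q w * ln (PY w) + - (q w * ln (PZY w))));
  last by move=> w _; lra.
by rewrite big_split /= sumR_opp /cond_entropy /entropy /PY /PZY; lra.
Qed.

Lemma q_le_PZY w : q w <= PZY w.
Proof. exact: ler_sumR_term. Qed.

Lemma PZY_le_PY w : PZY w <= PY w.
Proof. by apply: ler_sumR_subpred => // w' /eqP [_ ->]. Qed.

Lemma cond_entropy_ge0 : 0 <= cond_entropy q Z Y.
Proof.
rewrite cond_entropyE; apply: sumR_ge0 => w _.
have [q0|<-] := q_ge0 w; last lra.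
apply: Rmult_le_pos; first lra.
have := ln_le_ln (Rlt_le_trans _ _ _ q0 (q_le_PZY w)) (PZY_le_PY w); lra.
Qed.

Lemma cond_entropy_term_le w c : 0 < c ->
  q w * (ln (PY w) - ln (PZY w)) <= q w * ln c + q w * (PY w / PZY w / c).
Proof.
move=> c0; have [q0|<-] := q_ge0 w; last lra.
have b0 := Rlt_le_trans _ _ _ q0 (q_le_PZY w).
have := ln_ratio_le (Rlt_le_trans _ _ _ b0 (PZY_le_PY w)) b0 c0.
by rewrite -Rmult_plus_distr_l; apply: Rmult_le_compat_l; lra.
Qed.

Lemma weighted_ratio_le1 w : q w * (PY w / PZY w) <= 1.
Proof.
have [q0|<-] := q_ge0 w; last by rewrite Rmult_0_l; lra.
have PY0 : 0 <= PY w by apply: sumR_ge0.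
have qZY := Rdiv_le1 (q_ge0 w) (q_le_PZY w).
have qZY0 : 0 <= q w / PZY w.
  apply: Rmult_le_pos; first lra; apply: Rlt_le; apply: Rinv_0_lt_compat.
  exact: Rlt_le_trans q0 (q_le_PZY w).
have := prob_le1 (fun w' => Y w' == Y w); rewrite -/(PY w) /Rdiv => PY1.
have -> : q w * (PY w * / PZY w) = (q w * / PZY w) * PY w by ring.
by rewrite -[1]Rmult_1_l; apply: Rmult_le_compat.
Qed.

Variable G : pred O.
Hypothesis Z_fun_Y_on_G :
  forall w1 w2, G w1 -> G w2 -> Y w1 = Y w2 -> Z w1 = Z w2.

(* On [G] all points of a fibre of [Y] share the same [(Z, Y)]-class, whose
   probability dominates the mass of the fibre. *)
Lemma fiber_ratio_sum_le1 y :
  \big[Rplus/0]_(w | G w && (y == Y w)) (q w / PZY w) <= 1.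
Proof.
have [w0 /andP [G0 /eqP Y0]|none] := pickP (fun w => G w && (y == Y w)); last first.
  by rewrite big_pred0 //; lra.
have fiber_eq w : G w && (y == Y w) -> (Z w, Y w) = (Z w0, Y w0).
  move=> /andP [Gw /eqP Yw]; have YY : Y w = Y w0 by rewrite -Yw -Y0.
  by rewrite (Z_fun_Y_on_G Gw G0 YY) YY.
rewrite (eq_bigr (fun w => q w / PZY w0)) => [|w /fiber_eq Ew]; last first.
  by rewrite /PZY Ew.
rewrite /Rdiv sumR_mulr; apply: Rdiv_le1; first by apply: sumR_ge0.
by apply: ler_sumR_subpred => // w /fiber_eq ->.
Qed.

Lemma good_ratio_sum_le1 :
  \big[Rplus/0]_(w | G w) (q w * (PY w / PZY w)) <= 1.
Proof.
have expand w : q w * (PY w / PZY w) =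
    \big[Rplus/0]_(w' | Y w' == Y w) (q w / PZY w * q w').
  by rewrite sumR_mull /PY /prob /Rdiv; ring.
rewrite (eq_bigr _ (fun w _ => expand w)) (exchange_big_dep predT) //= -q_sum1.
apply: ler_sumR => w' _; rewrite sumR_mulr.
have := fiber_ratio_sum_le1 (Y w'); have := q_ge0 w'; nra.
Qed.

Theorem fano : cond_entropy q Z Y <= 2 + prob q (predC G) * ln (INR #|O|).
Proof.
have N0 := pmf_card_gt0 q_sum1; set N := INR #|O| in N0 *.
(* The weight [c] in [ln x <= ln c + x / c] is 1 on [G], where the ratios sum
   to at most 1, and [|O|] off [G], where each of the [|O|] terms is at most
   [1 / |O|]; the price is [ln |O|] times the probability of missing [G]. *)
pose c w := if G w then 1 else N.
have c0 w : 0 < c w by rewrite /c; case: (G w); lra.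
rewrite cond_entropyE.
apply: Rle_trans (ler_sumR (fun w _ => cond_entropy_term_le w (c0 w))) _.
rewrite big_split /= !(bigID G xpredT) /=.
have good_ln : \big[Rplus/0]_(w | G w) (q w * ln (c w)) = 0.
  by rewrite big1 // => w Gw; rewrite /c Gw ln_1; lra.
have bad_ln : \big[Rplus/0]_(w | ~~ G w) (q w * ln (c w)) =
    prob q (predC G) * ln N.
  by rewrite /prob -sumR_mulr; apply: eq_big => // w /negbTE Gw; rewrite /c Gw.
have good_ratio : \big[Rplus/0]_(w | G w) (q w * (PY w / PZY w / c w)) <= 1.
  rewrite (eq_bigr (fun w => q w * (PY w / PZY w))); first exact: good_ratio_sum_le1.
  by move=> w Gw; rewrite /c Gw /Rdiv Rinv_1 Rmult_1_r.
have bad_ratio :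
    \big[Rplus/0]_(w | ~~ G w) (q w * (PY w / PZY w / c w)) <= 1.
  apply: Rle_trans (_ : \big[Rplus/0]_(w | ~~ G w) / N <= 1).
    apply: ler_sumR => w /negbTE Gw; rewrite /c Gw /Rdiv -Rmult_assoc.
    rewrite -[X in _ <= X]Rmult_1_l; apply: Rmult_le_compat_r.
      by apply: Rlt_le; apply: Rinv_0_lt_compat.
    exact: weighted_ratio_le1.
  apply: Rle_trans (_ : \big[Rplus/0]_(w : O) / N <= 1).
    by apply: ler_sumR_subpred => // w; apply: Rlt_le; apply: Rinv_0_lt_compat.
  by rewrite sumR_const -/N Rinv_r; lra.
lra.
Qed.

End Fano.

Section Iid.
Variables (W : finType) (p : W -> R).
Hypothesis p_ge0 : forall w, 0 <= p w.
Hypothesis p_sum1 : \big[Rplus/0]_(w : W) p w = 1.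

Lemma iid_pmf_ge0 n (w : {ffun 'I_n -> W}) : 0 <= iid_pmf p w.
Proof. by apply: (big_ind (fun x => 0 <= x)) => // *; [lra | apply: Rmult_le_pos]. Qed.

Lemma iid_pmf_sum1 n : \big[Rplus/0]_(w : {ffun 'I_n -> W}) iid_pmf p w = 1.
Proof.
rewrite /iid_pmf -(bigA_distr_bigA (fun _ : 'I_n => p)).
by rewrite big1 // => t _; apply: p_sum1.
Qed.

Lemma ln_card_ge0 : 0 <= ln (INR #|W|).
Proof.
rewrite -ln_1; apply: ln_le_ln; first lra.
have := pmf_card_gt0 p_sum1; case: #|W| => [/= | k _]; first lra.
by rewrite S_INR; have := pos_INR k; lra.
Qed.

Lemma ln_card_ffun n : ln (INR #|{ffun 'I_n -> W}|) = INR n * ln (INR #|W|).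
Proof.
rewrite card_ffun card_ord -ln_pow; last exact: pmf_card_gt0 p_sum1.
congr ln.
by elim: n => //= n IH; rewrite expnS mult_INR IH.
Qed.

End Iid.

Lemma Un_cv_inv_INR_mul_0 (s : nat -> R) a b : 0 <= a -> 0 <= b ->
  (forall n, 0 <= s n) ->
  (forall d, 0 < d < 1 -> exists N, forall n, (N <= n)%N ->
     s n <= a + d * (b * INR n)) ->
  Un_cv (fun n => / INR n * s n) 0.
Proof.
move=> a0 b0 s0 s_small eps eps0.
pose d := Rmin (1 / 2) (eps / (2 * (b + 1))).
have d_bounds : 0 < d < 1.
  split; last by apply: Rle_lt_trans (Rmin_l _ _) _; lra.
  by apply: Rmin_glb_lt; [lra | apply: Rdiv_lt_0_compat; lra].
have db : d * b < eps / 2.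
  have : d * (2 * (b + 1)) <= eps.
    apply: Rle_trans (Rmult_le_compat_r _ _ _ _ (Rmin_r _ _)) _; first lra.
    by rewrite /Rdiv Rmult_assoc Rinv_l; lra.
  have := proj1 d_bounds; nra.
have [N1 s_N1] := s_small d d_bounds.
have [N2 [N2_small N2_pos]] :
    exists N2, / INR N2 < eps / (2 * (a + 1)) /\ (0 < N2)%coq_nat.
  by apply: archimed_cor1; apply: Rdiv_lt_0_compat; lra.
exists (maxn N1 N2) => n /leP; rewrite geq_max => /andP [n1 n2].
have N2R : 0 < INR N2 by apply: lt_0_INR.
have nR : INR N2 <= INR n by apply: le_INR; apply/leP.
have inv_n : / INR n <= / INR N2 by apply: Rinv_le_contravar.
have inv_n0 : 0 < / INR n by apply: Rinv_0_lt_compat; lra.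
have a_n : a * / INR n < eps / 2.
  have : (a + 1) * / INR N2 < eps / 2.
    have -> : eps / 2 = (a + 1) * (eps / (2 * (a + 1))) by field; lra.
    by apply: Rmult_lt_compat_l; lra.
  nra.
have := s_N1 n n1; have := s0 n => sn0 sn_le.
rewrite /R_dist Rminus_0_r Rabs_right; last by apply: Rle_ge; apply: Rmult_le_pos; lra.
apply: Rle_lt_trans (Rmult_le_compat_l _ _ _ (Rlt_le _ _ inv_n0) sn_le) _.
have -> : / INR n * (a + d * (b * INR n)) = a * / INR n + d * b * (/ INR n * INR n) by ring.
rewrite Rinv_l; lra.
Qed.

Lemma lam_ge0 m (P : {set {set 'I_m}}) B : 0 <= lam P B.
Proof.
rewrite /lam; case: ifP => _; last lra.
by have [n0|<-] := pos_INR (#|P| - 1); [apply/Rlt_le/Rinv_0_lt_compat | rewrite Rinv_0; lra].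
Qed.

Section CommonRandomness.
Variables (m : nat) (Al : 'I_m -> finType) (W : finType) (p : W -> R).
Variable X : forall i : 'I_m, W -> Al i.
Hypothesis p_ge0 : forall w, 0 <= p w.
Hypothesis p_sum1 : \big[Rplus/0]_(w : W) p w = 1.

Lemma Xn_eq_of_XnA_eq n (A : {set 'I_m}) i (w1 w2 : {ffun 'I_n -> W}) :
  i \in A -> XnA X A w1 = XnA X A w2 -> Xn X i w1 = Xn X i w2.
Proof.
move=> iA /eq_in_map eqXn.
by apply: (@eq_from_Tagged _ (fun j => {ffun 'I_n -> Al j})); apply: eqXn; rewrite mem_enum.
Qed.

Lemma cond_entropy_recoverable_le n (Fn : communication Al n)
    (Jn : {ffun 'I_n -> W} -> nat)
    (Ji : forall i : 'I_m, {ffun 'I_n -> Al i} -> seq nat -> nat)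
    (B : {set 'I_m}) d :
  B != setT ->
  prob (iid_pmf p (n := n))
    (fun w => [forall i, Ji i (Xn X i w) (run X Fn w) == Jn w]) >= 1 - d ->
  cond_entropy (iid_pmf p (n := n)) Jn (fun w => (XnA X (~: B) w, run X Fn w))
    <= 2 + d * (INR n * ln (INR #|W|)).
Proof.
move=> BT recover.
have [i Bi] : exists i, i \in ~: B.
  apply/set0Pn; apply: contra BT => /eqP BC0.
  by rewrite -(setCK B) BC0 setC0.
set G := fun w => _ in recover.
have J_fun : forall w1 w2, G w1 -> G w2 ->
    (XnA X (~: B) w1, run X Fn w1) = (XnA X (~: B) w2, run X Fn w2) ->
    Jn w1 = Jn w2.
  move=> w1 w2 G1 G2 [XnA12 run12].
  move: G1 G2 => /forallP/(_ i)/eqP <- /forallP/(_ i)/eqP <-.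
  by rewrite (Xn_eq_of_XnA_eq Bi XnA12) run12.
apply: Rle_trans (fano (@iid_pmf_ge0 _ _ p_ge0 n) (iid_pmf_sum1 p_sum1 n) J_fun) _.
rewrite (ln_card_ffun p_sum1); apply/Rplus_le_compat_l/Rmult_le_compat_r.
  by apply: Rmult_le_pos; [apply: pos_INR | apply: ln_card_ge0 p_sum1].
by rewrite (prob_predC (iid_pmf_sum1 p_sum1 n)); lra.
Qed.

Variables (F : forall n, communication Al n)
          (J : forall n, (forall i : 'I_m, {ffun 'I_n -> Al i}) -> nat).
Variable lamB : {set 'I_m} -> R.
Hypothesis lamB_ge0 : forall B, 0 <= lamB B.

Let S n := \big[Rplus/0]_(B : {set 'I_m} | (B != set0) && (B != setT))
  (lamB B * cond_entropy (@iid_pmf W p n) (J_val X J (n := n))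
              (fun w => (XnA X (~: B) w, run X (F n) w))).
Let L := \big[Rplus/0]_(B : {set 'I_m} | (B != set0) && (B != setT)) lamB B.

Lemma weighted_cond_entropy_CR_le : is_CR X p F J ->
  forall d, 0 < d < 1 -> exists N, forall n, (N <= n)%N ->
    S n <= L * 2 + d * (L * ln (INR #|W|) * INR n).
Proof.
move=> CR d d_bounds; have [N recover] := CR d d_bounds.
exists N => n /recover [Ji recover_n].
have -> : L * 2 + d * (L * ln (INR #|W|) * INR n) =
    L * (2 + d * (INR n * ln (INR #|W|))) by ring.
rewrite /L -sumR_mulr; apply: ler_sumR => B /andP [_ BT].
apply: Rmult_le_compat_l => //.
exact: cond_entropy_recoverable_le BT recover_n.
Qed.

End CommonRandomness.

Theorem lemma2 (m : nat) (Al : 'I_m -> finType) (W : finType) (p : W -> R)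
  (X : forall i : 'I_m, W -> Al i)
  (Hm : (2 <= m)%N)
  (Hp0 : forall w, 0 <= p w)
  (Hp1 : \big[Rplus/0]_(w : W) p w = 1)
  (Pstar : {set {set 'I_m}})
  (HP : is_partition_M Pstar)
  (Hmin : forall P : {set {set 'I_m}}, is_partition_M P ->
            Delta_part X p Pstar <= Delta_part X p P)
  (F : forall n, communication Al n)
  (J : forall n, (forall i : 'I_m, {ffun 'I_n -> Al i}) -> nat)
  (HJ : is_CR X p F J) :
  Un_cv (fun n : nat =>
           / INR n *
           \big[Rplus/0]_(B : {set 'I_m} | (B != set0) && (B != setT))
              (lam Pstar B *
               cond_entropy (@iid_pmf W p n) (J_val X J (n:=n))
                 (fun w => (XnA X (~: B) w, run X (F n) w))))
        0.
Proof.
have lam0 := @lam_ge0 m Pstar.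
have L0 : 0 <= \big[Rplus/0]_(B : {set 'I_m} | (B != set0) && (B != setT))
    lam Pstar B by apply: sumR_ge0.
apply: Un_cv_inv_INR_mul_0 (weighted_cond_entropy_CR_le Hp0 Hp1 lam0 HJ).
- lra.
- by apply: Rmult_le_pos => //; apply: ln_card_ge0 Hp1.
- move=> n; apply: sumR_ge0 => B _; apply: Rmult_le_pos => //.
  by apply: (@cond_entropy_ge0 _ (@iid_pmf W p n)); apply: iid_pmf_ge0.
Qed.
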